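(* Let $n\mid(q-1)$, let $\delta\ge2$, $b\ge1$, $m\ge1$ be integers with $\gcd(b,n)=1$, let $t\in\{0,\dots,n-1\}$ and let $\ell$ be an integer with $m-1+\delta\le\ell\le n-\delta$. Put $$A=\{\alpha^{t},\alpha^{t+b},\dots,\alpha^{t+(m-1)b},\alpha^{t+\ell b}\},\qquad B=\{1,\alpha^{b},\dots,\alpha^{(\delta-2)b}\},$$ and let $d_A^{\perp}$ be the minimum distance of the dual of $C_A$. Then $C_{AB}$ is a cyclic $(d_A^{\perp}-\delta+1,\delta)$-LRC over $\mathbb{F}_q$ with dimension $n-m-2\delta+3$. If moreover $\delta-2<n-m-d_A^{\perp}$, then $C_{AB}$ is an optimal $(d_A^{\perp}-\delta+1,\delta)$-LRC with minimum distance $m+\delta-1$.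
   Context: Let $q$ be a prime power and $n\mid(q-1)$, so the set $R_n$ of all $n$-th roots of unity lies in $\mathbb{F}_q$; let $\alpha\in\mathbb{F}_q$ be a primitive $n$-th root of unity. For $A,B\subseteq R_n$, $AB=\{\beta\gamma:\beta\in A,\gamma\in B\}$, and for $Z\subseteq R_n$, $C_Z$ denotes the cyclic code of length $n$ over $\mathbb{F}_q$ with complete defining set $Z$, i.e. the ideal generated by $\prod_{\beta\in Z}(x-\beta)$ in $\mathbb{F}_q[x]/(x^n-1)$, identified with a subspace of $\mathbb{F}_q^n$; it has dimension $n-|Z|$. Locality: for a linear code $C\subseteq\mathbb{F}_q^n$ and integers $r\ge1$, $\delta\ge2$, the $i$-th coordinate has $(r,\delta)$-locality if there is $S_i\subseteq\{1,\dots,n\}$ with $i\in S_i$, $|S_i|\le r+\delta-1$ such that the punctured code $C|_{S_i}$ has minimum distance at least $\delta$; $C$ is an $(r,\delta)$-LRC if every coordinate has $(r,\delta)$-locality. An $[n,k,d]$ $(r,\delta)$-LRC is optimal if $d=n-k-(\lceil k/r\rceil-1)(\delta-1)+1$ (this quantity is always an upper bound on $d$). *)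

From HB Require Import structures.
From mathcomp Require Import all_boot all_order all_algebra all_field.
Set Implicit Arguments. Unset Strict Implicit. Unset Printing Implicit Defensive.
Import Order.TTheory GRing.Theory Num.Theory.
Local Open Scope ring_scope.

Section Codes.
Variables (F : finFieldType) (n : nat).

Definition code := {set 'rV[F]_n}.

Definition wt (c : 'rV[F]_n) : nat := #|[set i : 'I_n | c ord0 i != 0]|.

Definition word_poly (c : 'rV[F]_n) : {poly F} := \sum_(i < n) c ord0 i *: 'X^i.

Definition gen_poly (Z : {set F}) : {poly F} := \prod_(z in Z) ('X - z%:P).

(* elements of F[x]/(x^n-1) are represented by polynomials of degree < n,
   i.e. by word_poly f for f in F^n. *)
(* C_Z : the ideal generated by gen_poly Z in F[x]/(x^n - 1), viewed in F^n *)
Definition cyclic_code (Z : {set F}) : code :=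
  [set c : 'rV[F]_n | [exists f : 'rV[F]_n,
      word_poly c == (gen_poly Z * word_poly f) %% ('X^n - 1)]].

Definition code_dim (C : code) : nat := \dim <<enum C>>%VS.

(* minimum distance: least weight of a nonzero codeword (n if none) *)
Definition min_dist (C : code) : nat :=
  \big[minn/n]_(c in C | c != 0) wt c.

Definition dual_code (C : code) : code :=
  [set y : 'rV[F]_n | [forall c in C, \sum_(i < n) c ord0 i * y ord0 i == 0]].

(* The i-th coordinate has (r,delta)-locality: some S containing i with
   |S| <= r + delta - 1 such that the punctured code C|_S has minimum
   distance >= delta (every nonzero word of C|_S has weight >= delta). *)
Definition has_locality (C : code) (r delta : nat) (i : 'I_n) : Prop :=
  exists S : {set 'I_n}, [/\ i \in S, (#|S| <= r + delta - 1)%N &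
    forall c, c \in C -> [exists j in S, c ord0 j != 0%R] ->
      (delta <= #|[set j in S | c ord0 j != 0%R]|)%N].

Definition is_LRC (C : code) (r delta : nat) : Prop :=
  [/\ (1 <= r)%N, (2 <= delta)%N & forall i : 'I_n, has_locality C r delta i].

(* optimal [n,k,d] (r,delta)-LRC: d = n - k - (ceil(k/r) - 1)(delta - 1) + 1 *)
Definition is_optimal_LRC (C : code) (r delta : nat) : Prop :=
  is_LRC C r delta /\
  (min_dist C)%:Z = n%:Z - (code_dim C)%:Z
     - (((code_dim C + r - 1) %/ r)%N%:Z - 1) * (delta%:Z - 1) + 1.

End Codes.

Definition set_mul (F : finFieldType) (A B : {set F}) : {set F} :=
  [set x * y | x in A, y in B].

From HB Require Import structures.
From mathcomp Require Import all_boot all_order all_algebra all_field zify ring.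
Set Implicit Arguments. Unset Strict Implicit. Unset Printing Implicit Defensive.
Import Order.TTheory GRing.Theory Num.Theory.
Local Open Scope ring_scope.

(* Write a = alpha^t and g = alpha^b, a primitive n-th root of unity since
   gcd(b, n) = 1, so that A = a {g^0, ..., g^(m-1), g^l} and
   B = {g^0, ..., g^(delta-2)}.  The proof has three layers.
   - Cyclic codes with zeros: C_Z is the code of words vanishing on Z; for
     distinct zeros z_0, ..., z_(p-1) it is the kernel of the full-rank
     check matrix (z_k^j), so it has dimension n - p, and the dual of C_Z
     lies in the row space of that matrix.
   - Weight bounds: a generalized BCH bound (a word killed by a weighted
     Vandermonde system of D rows has weight > D), root counting, and
     repair groups (sets S on which every codeword is 0 or has >= delta
     nonzero entries).
   - The construction: AB = a g^E for m + 2 delta - 3 distinct exponents E,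
     giving the dimension; the support of every dual codeword of C_A is a
     repair group of C_AB (BCH bound for the zeros A g^j, j < delta - 1),
     and cyclic shifts of a minimum weight one give the locality
     r = d_A - delta + 1; the consecutive zeros a g^j, j < m + delta - 2,
     give d >= m + delta - 1, and a codeword vanishing on k - 1 well chosen
     coordinates gives d <= m + delta - 1, which is the LRC bound. *)

Section CodesWithZeros.
Variables (F : finFieldType) (n : nat).
Implicit Types (c y : 'rV[F]_n).

Definition word_eval c (z : F) : F := \sum_(i < n) c ord0 i * z ^+ i.

Lemma coef_word_poly c (j : 'I_n) : (word_poly c)`_j = c ord0 j.
Proof.
rewrite /word_poly coef_sum (bigD1 j) //= coefZ coefXn eqxx mulr1 big1 ?addr0 //.
by move=> i ij; rewrite coefZ coefXn eq_sym (inj_eq val_inj) (negbTE ij) mulr0.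
Qed.

Lemma size_word_poly c : (size (word_poly c) <= n)%N.
Proof.
apply/leq_sizeP => j nj; rewrite /word_poly coef_sum big1 // => i _.
rewrite coefZ coefXn; case: eqP => [ji|]; last by rewrite mulr0.
by move: (ltn_ord i); rewrite -ji ltnNge nj.
Qed.

Lemma horner_word_poly c z : (word_poly c).[z] = word_eval c z.
Proof.
by rewrite horner_sum; apply: eq_bigr => i _; rewrite hornerZ hornerXn.
Qed.

Lemma word_poly_of_small (q : {poly F}) : (size q <= n)%N ->
  word_poly (\row_(i < n) q`_i) = q.
Proof.
move=> sq; apply/polyP => i; case: (ltnP i n) => [lin|ni].
  by rewrite (coef_word_poly _ (Ordinal lin)) mxE.
move/leq_sizeP: (leq_trans sq ni) => -> //.
by move/leq_sizeP: (leq_trans (size_word_poly (\row_(i < n) q`_i)) ni) => ->.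
Qed.

Hypothesis n_gt0 : (0 < n)%N.

(* When Z consists of n-th roots of unity, C_Z is the code of the words
   vanishing on Z: gen_poly Z divides x^n - 1, so reduction mod x^n - 1
   preserves the zeros in Z, and a word vanishing on Z is a multiple of
   gen_poly Z of size at most n. *)
Lemma cyclic_codeP (Z : {set F}) c : (forall z, z \in Z -> z ^+ n = 1) ->
  (c \in cyclic_code n Z) = [forall z in Z, word_eval c z == 0].
Proof.
move=> Zroot; apply/idP/forall_inP.
- rewrite inE => /existsP[f /eqP Ec] z zZ; rewrite -horner_word_poly Ec.
  set d := (X in _ %% X); set p := gen_poly Z * word_poly f.
  have dz : d.[z] = 0 by rewrite /d !hornerE Zroot // subrr.
  have pz : p.[z] = 0.
    by rewrite /p hornerM /gen_poly horner_prod (bigD1 z) //= !hornerE subrr !mul0r.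
  have := congr1 (horner^~ z) (divp_eq p d).
  by rewrite /= pz hornerD hornerM dz mulr0 add0r => <-.
- move=> cZ.
  have rts : all (root (word_poly c)) (enum Z).
    by apply/allP => z; rewrite mem_enum => /cZ; rewrite /root horner_word_poly.
  have urs : uniq_roots (enum Z) by rewrite uniq_rootsE enum_uniq.
  have [q Eq] := uniq_roots_prod_XsubC rts urs.
  rewrite big_enum /= -/(gen_poly Z) in Eq.
  have gn0 : gen_poly Z != 0 by rewrite monic_neq0 // monic_prod_XsubC.
  have sq : (size q <= n)%N.
    have [->|qn0] := eqVneq q 0; first by rewrite size_poly0.
    apply: leq_trans (size_word_poly c); rewrite Eq (size_mul qn0 gn0).
    have gs : (0 < size (gen_poly Z))%N by rewrite size_poly_gt0.
    by rewrite -(prednK gs) addnS leq_addr.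
  rewrite inE; apply/existsP; exists (\row_(i < n) q`_i).
  rewrite word_poly_of_small // mulrC -Eq modp_small //.
  by rewrite -polyC1 size_XnsubC // ltnS size_word_poly.
Qed.

Definition check_mx p (z : 'I_p -> F) : 'M[F]_(p, n) := \matrix_(k, j) z k ^+ j.

Section CheckMatrix.
Variables (p : nat) (z : 'I_p -> F).
Hypothesis z_root : forall k, z k ^+ n = 1.

Lemma cyclic_code_check_mx c :
  (c \in cyclic_code n [set z k | k : 'I_p]) = (c *m (check_mx z)^T == 0).
Proof.
rewrite cyclic_codeP; last by move=> x /imsetP[k _ ->].
apply/forall_inP/eqP => [H|H].
- apply/rowP => k; rewrite !mxE -[RHS](eqP (H _ (imset_f z (isT : k \in 'I_p)))).
  by apply: eq_bigr => j _; rewrite !mxE.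
- move=> x /imsetP[k _ ->]; have := congr1 (fun M : 'rV_p => M ord0 k) H.
  by rewrite !mxE => E; apply/eqP; rewrite -[RHS]E; apply: eq_bigr => j _; rewrite !mxE.
Qed.

(* The dual of C_Z lies in the row space of the check matrix
   (both are the orthogonal of the kernel of its transpose). *)
Lemma dual_code_sub_check_mx y :
  y \in dual_code (cyclic_code n [set z k | k : 'I_p]) -> (y <= check_mx z)%MS.
Proof.
rewrite inE => /forall_inP Hy; set K := kermx (check_mx z)^T.
have yK : (y <= kermx K^T)%MS.
  rewrite sub_kermx -[y]trmxK -trmx_mul trmx_eq0; apply/eqP/colP => i; rewrite !mxE.
  have cK : row i K \in cyclic_code n [set z k | k : 'I_p].
    by rewrite cyclic_code_check_mx -row_mul mulmx_ker row0.
  rewrite -[RHS](eqP (Hy _ cK)); apply: eq_bigr => j _; by rewrite !mxE.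
have HK : (check_mx z <= kermx K^T)%MS.
  by rewrite sub_kermx -[check_mx z]trmxK -trmx_mul mulmx_ker trmx0.
apply: submx_trans yK _; rewrite -(mxrank_leqif_sup HK).2.
by rewrite mxrank_ker mxrank_tr mxrank_ker mxrank_tr subKn // rank_leq_col.
Qed.

Hypotheses (z_inj : injective z) (p_le_n : (p <= n)%N).

(* Distinct zeros give a check matrix of full rank p: its first p columns
   form a Vandermonde matrix. *)
Lemma check_mx_row_full : row_full (check_mx z)^T.
Proof.
rewrite /row_full eqn_leq rank_leq_col /=.
pose P : 'M[F]_(p, n) := \matrix_(i, j) (i == j :> nat)%:R.
apply: leq_trans (mxrankM_maxr P _).
have -> : P *m (check_mx z)^T = Vandermonde p (\row_k z k).
  apply/matrixP => i k; rewrite !mxE.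
  have lin : (i < n)%N by apply: leq_trans (ltn_ord i) p_le_n.
  rewrite (bigD1 (Ordinal lin)) //= !mxE eqxx mul1r big1 ?addr0 // => j ji.
  rewrite !mxE; case: eqP => [E|]; last by rewrite mul0r.
  by case/eqP: ji; apply: val_inj; rewrite /= E.
rewrite mxrank_unit // unitmxE det_Vandermonde unitfE.
apply/prodf_neq0 => i _; apply/prodf_neq0 => j ij; rewrite !mxE subr_eq0.
by apply/eqP => /z_inj E; move: ij; rewrite E ltnn.
Qed.

(* Hence C_Z, the kernel of a surjective map F^n -> F^p, has dimension n - p. *)
Lemma code_dim_check_mx :
  code_dim (cyclic_code n [set z k | k : 'I_p]) = (n - p)%N.
Proof.
pose f : 'Hom('rV[F]_n, 'rV[F]_p) := linfun (mulmxr (check_mx z)^T).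
have Eker : <<enum (cyclic_code n [set z k | k : 'I_p])>>%VS = lker f.
  apply/subv_anti/andP; split.
    by apply/span_subvP => c; rewrite mem_enum cyclic_code_check_mx memv_ker lfunE.
  apply/subvP => c; rewrite memv_ker lfunE /= => cM.
  by apply: memv_span; rewrite mem_enum cyclic_code_check_mx.
have Eim : limg f = fullv.
  apply/eqP; rewrite eqEdim subvf /=; apply: dimvS; apply/subvP => v _.
  have [B BM] := row_fullP check_mx_row_full.
  apply/memv_imgP; exists (v *m B); first exact: memvf.
  by rewrite lfunE /= -mulmxA BM mulmx1.
have := limg_ker_dim f fullv; rewrite capfv Eim !dimvf /dim /= !mul1n.
by rewrite /code_dim Eker => E; apply: (@addIn p); rewrite E subnK.
Qed.

End CheckMatrix.
End CodesWithZeros.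

Section Weights.
Variables (F : finFieldType) (n : nat).
Implicit Types (c y : 'rV[F]_n) (C : code F n).

Definition supp c : {set 'I_n} := [set i | c ord0 i != 0].

Lemma wt_le_n c : (wt c <= n)%N.
Proof. by rewrite /wt (leq_trans (max_card _)) ?card_ord. Qed.

Lemma min_dist_le C c : c \in C -> c != 0 -> (min_dist C <= wt c)%N.
Proof.
by move=> cC cn0; rewrite /min_dist -minEnat -leEnat bigmin_le_cond ?cC.
Qed.

Lemma min_dist_ge C L : (L <= n)%N ->
  (forall c, c \in C -> c != 0 -> (L <= wt c)%N) -> (L <= min_dist C)%N.
Proof.
move=> Ln H; rewrite /min_dist -minEnat -leEnat.
by apply/bigmin_geP; split => // c /andP[]; apply: H.
Qed.

Lemma min_dist_attained C c0 : c0 \in C -> c0 != 0 ->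
  exists c, [/\ c \in C, c != 0 & wt c = min_dist C].
Proof.
move=> c0C c0n0; rewrite /min_dist -minEnat (bigmin_eq_arg n c0) ?c0C //.
  by case: arg_minP; rewrite ?c0C // => c /andP[cC cn0] _; exists c.
by move=> c _; apply: wt_le_n.
Qed.

(* Generalized BCH bound: if sum_i c_i w_i x_i^j = 0 for j < D, with distinct
   x_i and nonzero w_i, then a nonzero c has weight > D, since the restriction
   of c to its support is killed by a nonsingular (weighted Vandermonde)
   matrix otherwise. *)
Lemma bch_bound c (x w : 'I_n -> F) D : injective x -> (forall i, w i != 0) ->
  (forall j, (j < D)%N -> \sum_i c ord0 i * w i * x i ^+ j = 0) -> c != 0 ->
  (D < wt c)%N.
Proof.
move=> xi wn0 H cn0; rewrite ltnNge; apply/negP => wD.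
set J := supp c; pose e := enum_val (A := J).
pose W : 'M[F]_#|J| := \matrix_(j, k) (x (e k) ^+ j * w (e k)).
pose u : 'cV[F]_#|J| := \col_k c ord0 (e k).
have Wu : W *m u = 0.
  apply/colP => j; rewrite !mxE -[RHS](H j (leq_trans (ltn_ord j) wD)).
  rewrite (bigID (mem J)) /= [X in _ = _ + X]big1 ?addr0; last first.
    by move=> i; rewrite inE negbK => /eqP ->; rewrite !mul0r.
  rewrite (big_enum_val (fun i => c ord0 i * w i * x i ^+ j)) /=.
  by apply: eq_bigr => k _; rewrite !mxE /e mulrC [_ * w _]mulrC mulrA.
have Wunit : W \in unitmx.
  have -> : W = Vandermonde #|J| (\row_k x (e k)) *m diag_mx (\row_k w (e k)).
    by apply/matrixP => j k; rewrite mul_mx_diag !mxE.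
  rewrite unitmxE det_mulmx det_diag det_Vandermonde unitfE mulf_neq0 //.
    apply/prodf_neq0 => i _; apply/prodf_neq0 => j ij; rewrite !mxE subr_eq0.
    by apply/eqP => /xi/enum_val_inj E; move: ij; rewrite E ltnn.
  by apply/prodf_neq0 => i _; rewrite mxE.
have u0 : u = 0 by rewrite -[u]mul1mx -(mulVmx Wunit) -mulmxA Wu mulmx0.
case/negP: cn0; apply/eqP/rowP => i; rewrite mxE; apply/eqP/negPn/negP => ci.
have iJ : i \in J by rewrite inE.
have := congr1 (fun M : 'cV[F]_#|J| => M (enum_rank_in iJ i) ord0) u0.
by rewrite !mxE /e enum_rankK_in // => /eqP; rewrite (negbTE ci).
Qed.

Lemma wt_root_bound y (x : 'I_n -> F) (Q : {poly F}) N : injective x -> Q != 0 ->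
  (forall j, y ord0 j = 0 -> root Q (x j)) -> (size Q <= N)%N -> (n < wt y + N)%N.
Proof.
move=> xi Qn0 Hr sQ; set Zs := [set j : 'I_n | y ord0 j == 0].
have ZQ : (#|Zs| < size Q)%N.
  rewrite cardE -(size_map x); apply: max_poly_roots Qn0 _ _.
    by apply/allP => r /mapP[j]; rewrite mem_enum inE => /eqP /Hr Qj ->.
  by rewrite map_inj_uniq ?enum_uniq.
have wtZ : (wt y + #|Zs| = n)%N.
  rewrite /wt -[RHS]card_ord -(cardsC (supp y)); congr (_ + _)%N.
  by apply: eq_card => j; rewrite !inE negbK.
by rewrite -{1}wtZ ltn_add2l (leq_trans ZQ).
Qed.

Lemma exists_word_vanishing_on p (M : 'M[F]_(n, p)) (T : {set 'I_n}) :
  (p + #|T| < n)%N ->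
  exists c : 'rV[F]_n, [/\ c != 0, c *m M = 0 & forall j, j \in T -> c ord0 j = 0].
Proof.
move=> hT; pose E : 'M[F]_(n, #|T|) := \matrix_(j, u) (j == enum_val u)%:R.
set K := kermx (row_mx M E).
have Kn0 : K != 0.
  rewrite -mxrank_eq0 /K mxrank_ker -lt0n subn_gt0.
  by apply: leq_ltn_trans (rank_leq_col _) hT.
have [i ci] : exists i, row i K != 0.
  apply/existsP; move: Kn0; apply: contraR; rewrite negb_exists => /forallP H.
  by apply/eqP/row_matrixP => i; rewrite row0; apply/eqP/negPn.
have := mulmx_ker (row_mx M E); rewrite -/K => /(congr1 (row i)).
rewrite row0 row_mul mul_mx_row => /eqP; rewrite row_mx_eq0 => /andP[/eqP cM /eqP cE].
move: (row i K) ci cM cE => c cn0 cM cE; exists c; split => // j jT.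
have := congr1 (fun X : 'rV[F]_#|T| => X ord0 (enum_rank_in jT j)) cE.
rewrite !mxE (bigD1 j) //= !mxE enum_rankK_in // eqxx mulr1 big1 ?addr0 //.
by move=> k kj; rewrite !mxE enum_rankK_in // (negbTE kj) mulr0.
Qed.

Definition repair_group C (S : {set 'I_n}) (delta : nat) : Prop :=
  forall c, c \in C -> [exists j in S, c ord0 j != 0] ->
    (delta <= #|[set j in S | c ord0 j != 0%R]|)%N.

Lemma repair_group_vanish C S delta (D : {set 'I_n}) c :
  repair_group C S delta -> c \in C -> (#|D| < delta)%N ->
  (forall j, j \in S -> j \notin D -> c ord0 j = 0) -> forall j, j \in S -> c ord0 j = 0.
Proof.
move=> rS cC Dd cSD j jS; apply/eqP/negPn/negP => cj.
have /rS : [exists j in S, c ord0 j != 0] by apply/existsP; exists j; rewrite jS.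
move=> /(_ cC); rewrite leqNgt; apply/negP/negPn; apply: leq_ltn_trans Dd.
apply/subset_leq_card/subsetP => i; rewrite !inE => /andP[iS ci].
by apply/negPn/negP => /(cSD i iS) ci0; rewrite ci0 eqxx in ci.
Qed.

Hypothesis n_gt0 : (0 < n)%N.

Definition cshift y (d : nat) : 'rV[F]_n :=
  \row_(j < n) y ord0 (Ordinal (ltn_pmod (j + d) n_gt0)).

Lemma wt_cshift y d : (wt (cshift y d) <= wt y)%N.
Proof.
pose f (j : 'I_n) := Ordinal (ltn_pmod (j + d) n_gt0).
have finj : injective f.
  move=> i j /(congr1 val) /= /eqP; rewrite eqn_modDr !modn_small // => /eqP E.
  exact: val_inj.
rewrite /wt -(card_imset _ finj); apply/subset_leq_card/subsetP => x.
by case/imsetP => j; rewrite !inE mxE => jn ->.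
Qed.

Lemma cshift_to y (i j0 : 'I_n) : cshift y (j0 + n - i) ord0 i = y ord0 j0.
Proof.
rewrite mxE; congr (y ord0 _); apply: val_inj => /=.
have -> : (i + (j0 + n - i) = j0 + n)%N by have := ltn_ord i; lia.
by rewrite modnDr modn_small.
Qed.

End Weights.

Lemma set_between (T : finType) (X Y : {set T}) s :
  X \subset Y -> (#|X| <= s <= #|Y|)%N ->
  exists Z : {set T}, [/\ X \subset Z, Z \subset Y & #|Z| = s].
Proof.
move=> XY; elim: s => [|s IH] /andP[Xs sY].
  by exists X; split => //; apply/eqP; rewrite -leqn0.
have [Xe|Xs'] := eqVneq #|X| s.+1; first by exists X.
have [Z [XZ ZY cZ]] : exists Z : {set T}, [/\ X \subset Z, Z \subset Y & #|Z| = s].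
  by apply: IH; rewrite (ltnW sY) andbT -ltnS ltn_neqAle Xs' Xs.
have [y] : exists y, y \in Y :\: Z.
  apply/set0Pn; rewrite -card_gt0 cardsD; move: ZY => /setIidPr ->.
  by rewrite cZ subn_gt0.
rewrite inE => /andP[yZ yY]; exists (y |: Z); split.
- exact: subset_trans XZ (subsetUr _ _).
- by rewrite subUset sub1set yY.
- by rewrite cardsU1 yZ cZ.
Qed.

Section SparsePoly.
Variables (R : nzRingType) (p : nat) (e : 'I_p -> nat) (lam : 'I_p -> R).

Definition sparse_poly : {poly R} := \sum_k lam k *: 'X^(e k).

Lemma size_sparse_poly N : (forall k, e k < N)%N -> (size sparse_poly <= N)%N.
Proof.
move=> eN; apply/leq_sizeP => j Nj; rewrite coef_sum big1 // => k _.
rewrite coefZ coefXn; case: eqP => [E|]; last by rewrite mulr0.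
by have := eN k; rewrite -E ltnNge Nj.
Qed.

Lemma horner_sparse_poly x : sparse_poly.[x] = \sum_k lam k * x ^+ e k.
Proof. by rewrite horner_sum; apply: eq_bigr => k _; rewrite hornerZ hornerXn. Qed.

End SparsePoly.

Lemma ceil_div_eq2 k r : (r < k <= 2 * r)%N -> ((k + r - 1) %/ r = 2)%N.
Proof.
case/andP => rk k2r; have r_gt0 : (0 < r)%N by lia.
have -> : (k + r - 1 = 2 * r + (k - r - 1))%N by lia.
by rewrite divnMDl // divn_small //; lia.
Qed.

Section Corollary.
Variables (F : finFieldType) (n : nat) (alpha : F) (delta b m t l : nat).
Hypotheses (alpha_prim : n.-primitive_root alpha) (delta_ge2 : (2 <= delta)%N)
  (m_gt0 : (0 < m)%N) (b_coprime : coprime b n)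
  (l_ge : (m - 1 + delta <= l)%N) (l_le : (l <= n - delta)%N).

Lemma n_gt0 : (0 < n)%N. Proof. exact: prim_order_gt0 alpha_prim. Qed.

Lemma prim_pow_root (x : F) k : n.-primitive_root x -> (x ^+ k) ^+ n = 1.
Proof. by move=> px; rewrite exprAC (prim_expr_order px) expr1n. Qed.

Definition g : F := alpha ^+ b.
Definition a : F := alpha ^+ t.

Lemma g_prim : n.-primitive_root g.
Proof. by rewrite /g prim_root_exp_coprime. Qed.

Lemma g_exp_inj i j : (i < n)%N -> (j < n)%N -> g ^+ i = g ^+ j -> i = j.
Proof.
by move=> ilt jlt /eqP; rewrite (eq_prim_root_expr g_prim) !modn_small // => /eqP.
Qed.

Lemma g_pow_inj : injective (fun i : 'I_n => g ^+ i).
Proof. by move=> i j /g_exp_inj E; apply/val_inj/E. Qed.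

Lemma alpha_neq0 : alpha != 0.
Proof.
apply/eqP => a0; have := prim_expr_order alpha_prim; rewrite a0 expr0n.
by move: n_gt0; case: n => // k _ /= /eqP; rewrite eq_sym oner_eq0.
Qed.

Lemma a_neq0 : a != 0. Proof. by rewrite expf_neq0 // alpha_neq0. Qed.

Lemma ag_root k : (a * g ^+ k) ^+ n = 1.
Proof. by rewrite exprMn /a !prim_pow_root ?mulr1 // g_prim. Qed.

Lemma alpha_tb i : alpha ^+ (t + i * b) = a * g ^+ i.
Proof. by rewrite exprD /a /g mulnC exprM. Qed.

Definition eA (k : 'I_m.+1) : nat := if (k < m)%N then nat_of_ord k else l.
Definition zA (k : 'I_m.+1) : F := a * g ^+ eA k.

Definition Aset : {set F} :=
  [set alpha ^+ (t + i * b) | i : 'I_m] :|: [set alpha ^+ (t + l * b)].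
Definition Bset : {set F} := [set alpha ^+ (j * b) | j : 'I_(delta - 1)].

Lemma AsetE : Aset = [set zA k | k : 'I_m.+1].
Proof.
apply/setP => x; rewrite !inE; apply/idP/imsetP.
- case/orP => [/imsetP[i _ ->]|/eqP ->].
    by exists (widen_ord (leqnSn m) i); rewrite // /zA /eA /= ltn_ord alpha_tb.
  by exists ord_max; rewrite // /zA /eA /= ltnn alpha_tb.
- case=> k _ ->; rewrite /zA /eA; case: ifP => km; last by rewrite alpha_tb eqxx orbT.
  by apply/orP; left; apply/imsetP; exists (Ordinal km); rewrite ?alpha_tb.
Qed.

Lemma BsetE : Bset = [set g ^+ j | j : 'I_(delta - 1)].
Proof. by apply: eq_imset => j; rewrite /g mulnC exprM. Qed.

(* AB = a * g^E with E = [0, m+delta-2) + [l, l+delta-1): m + 2 delta - 3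
   distinct exponents, since l >= m + delta - 1 and l + delta - 2 < n. *)
Definition eAB (k : 'I_(m + 2 * delta - 3)) : nat :=
  if (k < m + delta - 2)%N then nat_of_ord k else (k - (m + delta - 2) + l)%N.
Definition zAB k : F := a * g ^+ eAB k.

Lemma zAB_inj : injective zAB.
Proof.
have eAB_lt k : (eAB k < n)%N.
  by rewrite /eAB; have := ltn_ord k; case: ifP => _; lia.
move=> i j /(mulfI a_neq0) /g_exp_inj E; apply: val_inj => /=.
by move: (E (eAB_lt i) (eAB_lt j)); rewrite /eAB; case: ifP => ?; case: ifP => ?; lia.
Qed.

Lemma zA_root k : zA k ^+ n = 1. Proof. exact: ag_root. Qed.
Lemma zAB_root k : zAB k ^+ n = 1. Proof. exact: ag_root. Qed.

Lemma ABsetE : set_mul Aset Bset = [set zAB k | k : 'I_(m + 2 * delta - 3)].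
Proof.
rewrite /set_mul AsetE BsetE; apply/setP => x; apply/imset2P/imsetP.
- case=> _ _ /imsetP[k _ ->] /imsetP[j _ ->] ->.
  rewrite /zA -mulrA -exprD /zAB; have hj := ltn_ord j; have hk := ltn_ord k.
  case: (ltnP k m) => km.
    have h : (k + j < m + 2 * delta - 3)%N by lia.
    exists (Ordinal h) => //; congr (_ * g ^+ _).
    by rewrite /eA /eAB /= km; case: ifP => // ?; lia.
  have h : (m + delta - 2 + j < m + 2 * delta - 3)%N by lia.
  exists (Ordinal h) => //; congr (_ * g ^+ _).
  by rewrite /eA /eAB /= ltnNge km /=; case: ifP => ?; lia.
- case=> k _ ->; rewrite /zAB /eAB; have hk := ltn_ord k; case: ifP => kl.
    have hi : (minn k (m - 1) < m.+1)%N by lia.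
    have hj : (k - minn k (m - 1) < delta - 1)%N by lia.
    exists (zA (Ordinal hi)) (g ^+ (Ordinal hj)); rewrite ?imset_f //.
      by apply/imsetP; exists (Ordinal hj).
    rewrite /zA /eA /= -mulrA -exprD; congr (_ * g ^+ _).
    by case: ifP => ?; lia.
  have hj : (k - (m + delta - 2) < delta - 1)%N by lia.
  exists (zA ord_max) (g ^+ (Ordinal hj)); rewrite ?imset_f //.
    by apply/imsetP; exists (Ordinal hj).
  by rewrite /zA /eA /= ltnn -mulrA -exprD; congr (_ * g ^+ _); lia.
Qed.

Definition CC : code F n := cyclic_code n (set_mul Aset Bset).
Definition DA : code F n := dual_code (cyclic_code n Aset).

Lemma CC_check_mx c : (c \in CC) = (c *m (check_mx n zAB)^T == 0).
Proof. by rewrite /CC ABsetE (cyclic_code_check_mx n_gt0 zAB_root). Qed.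

Lemma code_dim_CC : code_dim CC = (n - (m + 2 * delta - 3))%N.
Proof.
rewrite /CC ABsetE code_dim_check_mx //.
- exact: n_gt0.
- exact: zAB_root.
- exact: zAB_inj.
- lia.
Qed.

Lemma CC_vanish c x : c \in CC -> x \in set_mul Aset Bset -> word_eval c x = 0.
Proof.
rewrite /CC (cyclic_codeP n_gt0); last first.
  by rewrite ABsetE => z /imsetP[k _ ->]; exact: zAB_root.
by move=> /forall_inP H /H /eqP.
Qed.

Definition dual_form (y : 'rV[F]_n) : Prop :=
  exists lam : 'I_m.+1 -> F, forall j : 'I_n, y ord0 j = \sum_k lam k * zA k ^+ j.

Lemma DA_dual_form y : y \in DA -> dual_form y.
Proof.
rewrite /DA AsetE => /(dual_code_sub_check_mx n_gt0 zA_root) /submxP[D ->].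
by exists (D ord0) => j; rewrite !mxE; apply: eq_bigr => k _; rewrite !mxE.
Qed.

Definition y0 : 'rV[F]_n := \row_(j < n) zA ord0 ^+ j.

Lemma y0_DA : y0 \in DA.
Proof.
rewrite inE; apply/forall_inP => c; rewrite (cyclic_codeP n_gt0); last first.
  by rewrite AsetE => x /imsetP[k _ ->]; exact: zA_root.
have zA0 : zA ord0 \in Aset by rewrite AsetE imset_f.
move=> /forall_inP/(_ _ zA0)/eqP H.
by apply/eqP; rewrite -[RHS]H; apply: eq_bigr => j _; rewrite mxE.
Qed.

Lemma y0_neq0 : y0 != 0.
Proof.
by apply/eqP => /rowP/(_ (Ordinal n_gt0)); rewrite !mxE expr0 => /eqP; rewrite oner_eq0.
Qed.

(* Weight of dual codewords: y_j = a^j Q(g^j) with Q = sum_k lam_k x^(eA k)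
   of size <= l + 1, and also (g^j)^(n-l) Q(g^j) = Q'(g^j) with Q' of size
   <= n - l + m; counting roots at the zero coordinates of y gives
   wt y >= n - l and wt y >= l - m + 1. *)
Lemma dual_form_wt y : dual_form y -> y != 0 ->
  (n - l <= wt y)%N /\ (l - m + 1 <= wt y)%N.
Proof.
case=> lam Hy yn0.
pose Q1 := sparse_poly eA lam.
pose eA' (k : 'I_m.+1) := if (k < m)%N then (nat_of_ord k + (n - l))%N else 0%N.
pose Q2 := sparse_poly eA' lam.
have yE j : y ord0 j = a ^+ j * Q1.[g ^+ j].
  rewrite Hy horner_sparse_poly mulr_sumr; apply: eq_bigr => k _.
  by rewrite /zA exprMn mulrCA (exprAC g).
have Q2E j : Q2.[g ^+ j] = (g ^+ j) ^+ (n - l) * Q1.[g ^+ j].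
  rewrite !horner_sparse_poly mulr_sumr; apply: eq_bigr => k _.
  rewrite mulrCA -exprD /eA' /eA; case: ifP => km; first by rewrite addnC.
  by rewrite subnK ?prim_pow_root ?g_prim //; lia.
have Q1_neq0 : Q1 != 0.
  apply: contra yn0 => /eqP Q0; apply/eqP/rowP => j.
  by rewrite yE Q0 horner0 mulr0 mxE.
have Q1_root j : y ord0 j = 0 -> root Q1 (g ^+ j).
  by rewrite yE => /eqP; rewrite mulf_eq0 expf_eq0 (negbTE a_neq0) andbF.
have Q2_neq0 : Q2 != 0.
  apply: contra yn0 => /eqP Q0; apply/eqP/rowP => j; rewrite yE mxE.
  have /esym/eqP := Q2E j; rewrite Q0 horner0 mulf_eq0 expf_eq0 andbC.
  by rewrite !expf_eq0 (negbTE alpha_neq0) !andbF /= => /eqP ->; rewrite mulr0.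
have Q2_root j : y ord0 j = 0 -> root Q2 (g ^+ j).
  by move=> /Q1_root /rootP Q1j; apply/rootP; rewrite Q2E Q1j mulr0.
have sQ1 : (size Q1 <= l.+1)%N.
  by apply: size_sparse_poly => k; rewrite /eA; case: ifP; lia.
have sQ2 : (size Q2 <= n - l + m)%N.
  by apply: size_sparse_poly => k; rewrite /eA'; case: ifP; lia.
have := wt_root_bound g_pow_inj Q1_neq0 Q1_root sQ1.
have := wt_root_bound g_pow_inj Q2_neq0 Q2_root sQ2.
lia.
Qed.

Lemma DA_wt_bounds : (n - l <= min_dist DA)%N /\ (l - m + 1 <= min_dist DA)%N.
Proof.
split; apply: min_dist_ge; try lia; move=> y /DA_dual_form yr yn0;
  by have [] := dual_form_wt yr yn0.
Qed.

Lemma mulzAg_AB k (j : 'I_(delta - 1)) : zA k * g ^+ j \in set_mul Aset Bset.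
Proof.
apply/imset2P; exists (zA k) (g ^+ j) => //; first by rewrite AsetE imset_f.
by rewrite BsetE; apply/imsetP; exists j.
Qed.

(* The support of a dual codeword of C_A is a repair group of C_AB: for c in
   C_AB, the word (c_j y_j)_j has the zeros g^0, ..., g^(delta-2), because
   A B contains A g^j for j < delta - 1; the BCH bound applies. *)
Lemma dual_form_repair y : dual_form y -> repair_group CC (supp y) delta.
Proof.
case=> lam Hy c cC /existsP[j0 /andP[j0S cj0]].
pose z := \row_(i < n) (c ord0 i * y ord0 i).
have zn0 : z != 0.
  apply/eqP => /rowP/(_ j0); rewrite !mxE => /eqP; rewrite mulf_eq0 (negbTE cj0) /=.
  by move: j0S; rewrite inE => /negbTE ->.
have zeros j : (j < delta - 1)%N -> \sum_i z ord0 i * 1 * (g ^+ i) ^+ j = 0.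
  move=> jd; transitivity (\sum_k lam k * word_eval c (zA k * g ^+ j)).
    rewrite /word_eval; under [RHS]eq_bigr do rewrite mulr_sumr.
    rewrite [RHS]exchange_big; apply: eq_bigr => i _.
    rewrite mxE mulr1 Hy mulr_sumr mulr_suml; apply: eq_bigr => k _.
    by rewrite /zA (exprAC g i j) !exprMn; ring.
  by rewrite big1 // => k _; rewrite (CC_vanish cC (mulzAg_AB k (Ordinal jd))) mulr0.
have := bch_bound g_pow_inj (fun=> oner_neq0 F) zeros zn0.
have -> : wt z = #|[set j in supp y | c ord0 j != 0%R]|.
  by apply: eq_card => i; rewrite !inE mxE mulf_eq0 negb_or andbC.
lia.
Qed.

Lemma dual_form_cshift y d : dual_form y -> dual_form (cshift n_gt0 y d).
Proof.
case=> lam Hy; exists (fun k => lam k * zA k ^+ d) => j.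
by rewrite mxE Hy; apply: eq_bigr => k _ /=; rewrite expr_mod ?zA_root // exprD; ring.
Qed.

Lemma DA_min_word : exists y, [/\ dual_form y, y != 0 & wt y = min_dist DA].
Proof.
have [y [yDA yn0 wy]] := min_dist_attained y0_DA y0_neq0.
by exists y; split => //; apply: DA_dual_form.
Qed.

(* Locality: the coordinate i lies in a shift of a minimum repair group. *)
Theorem CC_is_LRC : is_LRC CC (min_dist DA + 1 - delta) delta.
Proof.
have [dA_ge _] := DA_wt_bounds.
split; [lia | exact: delta_ge2 |] => i.
have [y [yr yn0 wy]] := DA_min_word.
have [j0 yj0] : exists j0, y ord0 j0 != 0.
  apply/existsP; apply: contraR yn0; rewrite negb_exists => /forallP H.
  by apply/eqP/rowP => j; rewrite mxE; apply/eqP/negPn.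
set y' := cshift n_gt0 y (j0 + n - i).
exists (supp y'); split.
- by rewrite inE cshift_to.
- by apply: leq_trans (wt_cshift n_gt0 y _) _; rewrite wy; lia.
- exact/dual_form_repair/dual_form_cshift.
Qed.

(* BCH bound: C_AB has the m + delta - 2 consecutive zeros a g^j. *)
Lemma CC_min_dist_ge : (m + delta - 1 <= min_dist CC)%N.
Proof.
apply: min_dist_ge => [|c cC cn0]; first lia.
have ag_AB j : (j < m + delta - 2)%N -> a * g ^+ j \in set_mul Aset Bset.
  move=> jl; have h : (j < m + 2 * delta - 3)%N by lia.
  by rewrite ABsetE; apply/imsetP; exists (Ordinal h); rewrite // /zAB /eAB /= jl.
have zeros j : (j < m + delta - 2)%N -> \sum_i c ord0 i * a ^+ i * (g ^+ i) ^+ j = 0.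
  move=> jl; rewrite -[RHS](CC_vanish cC (ag_AB j jl)); apply: eq_bigr => i _.
  by rewrite exprMn (exprAC g) mulrA.
have a_pow_neq0 (i : 'I_n) : a ^+ i != 0 by rewrite expf_neq0 // a_neq0.
by have := bch_bound g_pow_inj a_pow_neq0 zeros cn0; lia.
Qed.

(* When d_A + delta - 2 < n - m there is a codeword of weight <= m + delta - 1:
   take delta - 1 positions D of a minimum repair group S and a set T of
   k - 1 positions (k = dim C_AB) containing S \ D and disjoint from D; some
   nonzero codeword vanishes on T, hence on S (it has < delta nonzero
   entries there), so it is supported outside T and D. *)
Lemma CC_min_dist_le : (min_dist DA + delta - 2 < n - m)%N ->
  (min_dist CC <= m + delta - 1)%N.
Proof.
move=> dA_small; have [dA_ge _] := DA_wt_bounds.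
have [y [yr yn0 wy]] := DA_min_word; set S := supp y.
have cS : #|S| = min_dist DA by [].
have [D [_ DS cD]] : exists D : {set 'I_n},
    [/\ set0 \subset D, D \subset S & #|D| = (delta - 1)%N].
  by apply: set_between; rewrite ?sub0set // cards0 cS /=; lia.
have cSD : #|S :\: D| = (#|S| - (delta - 1))%N.
  by rewrite cardsD (setIidPr DS) cD.
have [T [SDT TD cT]] : exists T : {set 'I_n},
    [/\ S :\: D \subset T, T \subset ~: D & #|T| = (n - (m + 2 * delta - 3) - 1)%N].
  apply: set_between; first by apply/subsetP => x; rewrite !inE => /andP[].
  by rewrite cSD cS cardsCs setCK card_ord cD; lia.
have few_conditions : (m + 2 * delta - 3 + #|T| < n)%N by rewrite cT; lia.
have [v [vn0 vM vT]] := exists_word_vanishing_on (check_mx n zAB)^T few_conditions.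
have vC : v \in CC by rewrite CC_check_mx vM.
have D_small : (#|D| < delta)%N by rewrite cD; lia.
have vS : forall j, j \in S -> v ord0 j = 0.
  apply: (repair_group_vanish (dual_form_repair yr) vC D_small) => j jS jD.
  by apply: vT; apply/(subsetP SDT); rewrite in_setD jD jS.
have TD0 : T :&: D = set0.
  apply/setP => x; rewrite !inE; apply/andP => -[/(subsetP TD)].
  by rewrite inE => /negbTE ->.
have : supp v \subset ~: (T :|: D).
  apply/subsetP => x; rewrite !inE negb_or => vx; apply/andP; split; apply/negP => xTD.
    by rewrite vT ?eqxx in vx.
  by rewrite vS ?eqxx ?(subsetP DS) in vx.
move=> /subset_leq_card; rewrite (cardsCs (~: _)) setCK card_ord cardsU TD0.
rewrite cards0 subn0 cT cD => wv.
by apply: leq_trans (min_dist_le vC vn0) _; apply: leq_trans wv _; lia.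
Qed.

Lemma CC_min_dist_eq : (min_dist DA + delta - 2 < n - m)%N ->
  min_dist CC = (m + delta - 1)%N.
Proof.
by move=> dA_small; apply/eqP; rewrite eqn_leq CC_min_dist_le // CC_min_dist_ge.
Qed.

(* With k = n - m - 2 delta + 3 and r = d_A - delta + 1 we have r < k <= 2r,
   so ceil(k/r) = 2 and the LRC bound n - k - (delta - 1) + 1 = m + delta - 1
   is attained. *)
Theorem CC_optimal : (min_dist DA + delta - 2 < n - m)%N ->
  is_optimal_LRC CC (min_dist DA + 1 - delta) delta.
Proof.
move=> dA_small; have [dA_ge_nl dA_ge_lm] := DA_wt_bounds.
split; first exact: CC_is_LRC.
rewrite CC_min_dist_eq // code_dim_CC ceil_div_eq2; first lia.
by apply/andP; split; lia.
Qed.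

End Corollary.

Theorem corollary4p5 (F : finFieldType) (n : nat) (alpha : F)
  (delta b m t l : nat) :
  (n %| #|F|.-1)%N ->
  n.-primitive_root alpha ->
  (2 <= delta)%N -> (1 <= b)%N -> (1 <= m)%N -> coprime b n ->
  (t < n)%N ->
  (m - 1 + delta <= l)%N -> (l <= n - delta)%N ->
  let A : {set F} :=
    [set alpha ^+ (t + i * b) | i : 'I_m] :|: [set alpha ^+ (t + l * b)] in
  let B : {set F} := [set alpha ^+ (j * b) | j : 'I_(delta - 1)] in
  let dA := min_dist (dual_code (cyclic_code n A)) in
  let C := cyclic_code n (set_mul A B) in
  (is_LRC C (dA + 1 - delta) delta /\
   (code_dim C)%:Z = n%:Z - m%:Z - 2 * delta%:Z + 3) /\
  (delta%:Z - 2 < n%:Z - m%:Z - dA%:Z ->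
   is_optimal_LRC C (dA + 1 - delta) delta /\ min_dist C = (m + delta - 1)%N).
Proof.
move=> _ alpha_prim delta_ge2 _ m_gt0 b_coprime _ l_ge l_le A B dA C.
split; first split.
- exact: CC_is_LRC.
- by rewrite (code_dim_CC t alpha_prim delta_ge2 m_gt0 b_coprime l_ge l_le); lia.
move=> dA_lt; have dA_small : (dA + delta - 2 < n - m)%N by lia.
by split; [exact: CC_optimal | exact: CC_min_dist_eq].
Qed.
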